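(* Let $F\colon\mathbf{OML}^{\mathrm{op}}\to\mathbf{Loc}$ be any functor whose restriction to boolean algebras is naturally isomorphic to the Stone spectrum functor $B\mapsto\mathrm{Idl}(B)$. Then $F(\mathrm{Proj}(M_n(\mathbb{C})))$ is the trivial locale for every $n\ge 3$.
   Context: $\mathbf{OML}$ is the category of orthomodular lattices and their (ortholattice) homomorphisms; boolean algebras are in particular orthomodular lattices. $\mathrm{Proj}(M_n(\mathbb{C}))$ is the orthomodular lattice of projections in the $n\times n$ complex matrices (equivalently, of subspaces of $\mathbb{C}^n$, with orthocomplement). The Stone spectrum of a boolean algebra $B$ is the locale whose frame is the frame $\mathrm{Idl}(B)$ of ideals of $B$. $\mathbf{Loc}$ is the category of locales; a locale is trivial if its frame satisfies $0=1$. *)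

From HB Require Import structures.
From mathcomp Require Import all_boot all_order all_algebra.
Set Implicit Arguments. Unset Strict Implicit. Unset Printing Implicit Defensive.
Import Order.TTheory GRing.Theory Num.Theory Num.Def.
Local Open Scope ring_scope.


Record OML := {
  ocar :> Type;
  ole : ocar -> ocar -> Prop;
  omeet : ocar -> ocar -> ocar;
  ojoin : ocar -> ocar -> ocar;
  obot : ocar;
  otop : ocar;
  ocmp : ocar -> ocar;
  ole_refl : forall x, ole x x;
  ole_trans : forall x y z, ole x y -> ole y z -> ole x z;
  ole_anti : forall x y, ole x y -> ole y x -> x = y;
  omeet_l : forall x y, ole (omeet x y) x;
  omeet_r : forall x y, ole (omeet x y) y;
  omeet_glb : forall x y z, ole z x -> ole z y -> ole z (omeet x y);
  ojoin_l : forall x y, ole x (ojoin x y);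
  ojoin_r : forall x y, ole y (ojoin x y);
  ojoin_lub : forall x y z, ole x z -> ole y z -> ole (ojoin x y) z;
  obot_le : forall x, ole obot x;
  ole_top : forall x, ole x otop;
  ocmpK : forall x, ocmp (ocmp x) = x;
  ocmp_anti : forall x y, ole x y -> ole (ocmp y) (ocmp x);
  omeet_cmp : forall x, omeet x (ocmp x) = obot;
  ojoin_cmp : forall x, ojoin x (ocmp x) = otop;
  orthomodular : forall x y, ole x y -> y = ojoin x (omeet y (ocmp x))
}.

Record OMLHom (A B : OML) := {
  ohom :> A -> B;
  ohom_meet : forall x y, ohom (@omeet A x y) = @omeet B (ohom x) (ohom y);
  ohom_join : forall x y, ohom (@ojoin A x y) = @ojoin B (ohom x) (ohom y);
  ohom_cmp : forall x, ohom (@ocmp A x) = @ocmp B (ohom x);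
  ohom_bot : ohom (@obot A) = obot B;
  ohom_top : ohom (@otop A) = otop B
}.

Definition idOMLHom (A : OML) : OMLHom A A :=
  @Build_OMLHom A A (fun x => x) (fun _ _ => erefl) (fun _ _ => erefl)
    (fun _ => erefl) erefl erefl.

Definition compOMLHom (A B D : OML) (g : OMLHom B D) (f : OMLHom A B) :
  OMLHom A D.
Proof.
refine (@Build_OMLHom A D (fun x => g (f x)) _ _ _ _ _).
- by move=> x y; rewrite !ohom_meet.
- by move=> x y; rewrite !ohom_join.
- by move=> x; rewrite !ohom_cmp.
- by rewrite !ohom_bot.
- by rewrite !ohom_top.
Defined.

(* Boolean algebras, viewed as orthomodular lattices: the distributive ones
   (a distributive ortholattice is a boolean algebra with complement ocmp). *)
Definition isBoolean (A : OML) : Prop :=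
  forall x y z : A, @omeet A x (@ojoin A y z) = @ojoin A (@omeet A x y) (@omeet A x z).

Record Frame := {
  fcar :> Type;
  fle : fcar -> fcar -> Prop;
  fsup : (fcar -> Prop) -> fcar;
  fmeet : fcar -> fcar -> fcar;
  ftop : fcar;
  fle_refl : forall x, fle x x;
  fle_trans : forall x y z, fle x y -> fle y z -> fle x z;
  fle_anti : forall x y, fle x y -> fle y x -> x = y;
  fsup_ub : forall (S : fcar -> Prop) x, S x -> fle x (fsup S);
  fsup_least : forall (S : fcar -> Prop) y, (forall x, S x -> fle x y) -> fle (fsup S) y;
  fmeet_l : forall x y, fle (fmeet x y) x;
  fmeet_r : forall x y, fle (fmeet x y) y;
  fmeet_glb : forall x y z, fle z x -> fle z y -> fle z (fmeet x y);
  fle_top : forall x, fle x ftop;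
  fmeet_sup : forall a (S : fcar -> Prop),
    fmeet a (fsup S) = fsup (fun y => exists2 x, S x & y = fmeet a x)
}.

Definition fbot (L : Frame) : L := @fsup L (fun _ => False).

Definition isFrameHom (L M : Frame) (h : L -> M) : Prop :=
  [/\ forall S : L -> Prop, h (@fsup L S) = @fsup M (fun y => exists2 x, S x & y = h x),
      forall x y, h (@fmeet L x y) = @fmeet M (h x) (h y)
    & h (@ftop L) = @ftop M].

(* A locale is presented by its frame of opens; Loc = Frm^op. *)
Definition Locale := Frame.

(* A locale map X -> Y is a frame homomorphism O(Y) -> O(X). *)
Record LocMap (X Y : Locale) := {
  lm_inv :> Y -> X;
  lm_inv_hom : isFrameHom lm_inv
}.

Definition trivial_locale (X : Locale) : Prop := fbot X = @ftop X.

Record OMLopLocFunctor := {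
  Fob : OML -> Locale;
  Fmor : forall A B : OML, OMLHom A B -> LocMap (Fob B) (Fob A);
  Fmor_id : forall (A : OML) (x : Fob A), Fmor (idOMLHom A) x = x;
  Fmor_comp : forall (A B D : OML) (f : OMLHom A B) (g : OMLHom B D) (x : Fob A),
    Fmor (compOMLHom g f) x = Fmor g (Fmor f x)
}.

(* The Stone spectrum: Idl(B), ordered by inclusion; for f : B -> B' the     *)
(* locale map Spec B' -> Spec B has frame map I |-> ideal generated by f[I]. *)
Definition isIdeal (B : OML) (I : B -> Prop) : Prop :=
  [/\ I (@obot B),
      forall x y, @ole B x y -> I y -> I x
    & forall x y, I x -> I y -> I (@ojoin B x y)].

Definition idl_map (B B' : OML) (f : OMLHom B B') (I : B -> Prop) : B' -> Prop :=
  fun y => exists2 x, I x & @ole B' y (f x).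

(* F restricted to boolean algebras is naturally isomorphic to the Stone
   spectrum functor: for each boolean B an isomorphism of frames
   eta_B : O(F B) ~= Idl(B) (an order isomorphism onto the ideals), natural
   in boolean-algebra homomorphisms f : B -> B'. *)
Definition StoneRestriction (F : OMLopLocFunctor) : Prop :=
  exists eta : forall B : OML, isBoolean B -> Fob F B -> (B -> Prop),
    (forall (B : OML) (hB : isBoolean B),
       [/\ forall x, isIdeal (eta B hB x),
           forall x y, @fle _ x y <-> (forall b, eta B hB x b -> eta B hB y b)
         & forall I, isIdeal I -> exists x, forall b, eta B hB x b <-> I b])
    /\
    (forall (B B' : OML) (hB : isBoolean B) (hB' : isBoolean B')
            (f : OMLHom B B') (x : Fob F B) (b' : B'),
       eta B' hB' (Fmor F f x) b' <-> idl_map f (eta B hB x) b').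

(* Proj(M_n(C)) = lattice of subspaces of C^n with orthocomplement.         *)
Section ProjLattice.
Variables (C : numClosedFieldType) (n : nat).

Definition adjmx (p q : nat) (A : 'M[C]_(p, q)) : 'M[C]_(q, p) := (map_mx conjC A)^T.

Lemma adjmxM p q r (A : 'M[C]_(p, q)) (B : 'M[C]_(q, r)) :
  adjmx (A *m B) = adjmx B *m adjmx A.
Proof. by rewrite /adjmx map_mxM trmx_mul. Qed.

Lemma adjmxK p q (A : 'M[C]_(p, q)) : adjmx (adjmx A) = A.
Proof.
by apply/matrixP => i j; rewrite /adjmx !mxE conjCK.
Qed.

Lemma rank_adjmx p q (A : 'M[C]_(p, q)) : \rank (adjmx A) = \rank A.
Proof. by rewrite /adjmx mxrank_tr mxrank_map. Qed.

Definition ocm (A : 'M[C]_n) : 'M[C]_n := kermx (adjmx A).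

Lemma sub_ocm p (u : 'M[C]_(p, n)) A : (u <= ocm A)%MS = (u *m adjmx A == 0).
Proof. exact: sub_kermx. Qed.

Lemma orth_sym p q (u : 'M[C]_(p, n)) (v : 'M[C]_(q, n)) :
  u *m adjmx v = 0 -> v *m adjmx u = 0.
Proof.
move=> h; rewrite -[v]adjmxK -adjmxM h.
by apply/matrixP => i j; rewrite /adjmx !mxE rmorph0.
Qed.

Lemma ocmS (A B : 'M[C]_n) : (A <= B)%MS -> (ocm B <= ocm A)%MS.
Proof.
case/submxP=> D ->; rewrite sub_ocm adjmxM mulmxA /ocm mulmx_ker mul0mx.
by [].
Qed.

Lemma sub_ocmK (A : 'M[C]_n) : (A <= ocm (ocm A))%MS.
Proof.
rewrite sub_ocm; apply/eqP/orth_sym; apply/eqP; rewrite -sub_ocm; exact: submx_refl.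
Qed.

Lemma rank_ocm (A : 'M[C]_n) : \rank (ocm A) = (n - \rank A)%N.
Proof. by rewrite /ocm mxrank_ker rank_adjmx. Qed.

Lemma ocmK (A : 'M[C]_n) : (ocm (ocm A) == A)%MS.
Proof.
have sA := sub_ocmK A.
have: (\rank A == \rank (ocm (ocm A)))%N.
  by rewrite !rank_ocm subKn ?rank_leq_col.
case: (mxrank_leqif_eq sA) => _ -> /andP[h1 h2].
by rewrite h1 h2.
Qed.

Lemma orth_self (v : 'rV[C]_n) : v *m adjmx v = 0 -> v = 0.
Proof.
move=> /matrixP /(_ 0 0); rewrite !mxE => /eqP.
rewrite psumr_eq0 => [/allP h|i _]; last by rewrite !mxE mul_conjC_ge0.
apply/matrixP => i j; rewrite (ord1 i) mxE.
have := h j (mem_index_enum j); rewrite !mxE => /implyP/(_ isT).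
by rewrite mul_conjC_eq0 => /eqP.
Qed.

Lemma cap_ocm (A : 'M[C]_n) : (A :&: ocm A = 0)%MS.
Proof.
apply/eqP/rowV0P => v; rewrite sub_capmx => /andP[/submxP[D ->]].
rewrite sub_ocm => /eqP h; apply: orth_self.
by rewrite adjmxM mulmxA h mul0mx.
Qed.

Lemma full_ocm (A : 'M[C]_n) : row_full (A + ocm A)%MS.
Proof.
rewrite /row_full; have := mxrank_sum_cap A (ocm A).
by rewrite cap_ocm mxrank0 addn0 rank_ocm subnKC ?rank_leq_col => [->|].
Qed.



Definition subsp := {A : 'M[C]_n | <<A>>%MS == A}.
Definition mksub (A : 'M[C]_n) : subsp := exist _ <<A>>%MS (introT eqP (genmx_id A)).

Lemma mksubE (A : 'M[C]_n) : (val (mksub A) :=: A)%MS.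
Proof. exact: genmxE. Qed.

Lemma subsp_eq (X Y : subsp) : (val X == val Y)%MS -> X = Y.
Proof.
case: X Y => [A hA] [B hB] /= e; apply: val_inj => /=.
move: (eq_genmx (eqmxP e)); by rewrite (eqP hA) (eqP hB).
Qed.

Lemma ocm_eqmx (A B : 'M[C]_n) : (A :=: B)%MS -> (ocm A :=: ocm B)%MS.
Proof.
move=> e; apply/eqmxP/andP; split; apply: ocmS; by rewrite e submx_refl.
Qed.

Lemma mksub_eq (A B : 'M[C]_n) : (A == B)%MS -> mksub A = mksub B.
Proof. by move=> e; apply: subsp_eq; rewrite !mksubE. Qed.

Definition sle (X Y : subsp) : Prop := (val X <= val Y)%MS.
Definition smeet (X Y : subsp) : subsp := mksub (val X :&: val Y)%MS.
Definition sjoin (X Y : subsp) : subsp := mksub (val X + val Y)%MS.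
Definition sbot : subsp := mksub 0.
Definition stop : subsp := mksub 1%:M.
Definition scmp (X : subsp) : subsp := mksub (ocm (val X)).

Lemma sle_refl X : sle X X. Proof. exact: submx_refl. Qed.
Lemma sle_trans X Y Z : sle X Y -> sle Y Z -> sle X Z.
Proof. exact: submx_trans. Qed.
Lemma sle_anti X Y : sle X Y -> sle Y X -> X = Y.
Proof. by move=> h1 h2; apply: subsp_eq; rewrite /sle in h1 h2 *; rewrite h1 h2. Qed.
Lemma smeet_l X Y : sle (smeet X Y) X.
Proof. by rewrite /sle mksubE capmxSl. Qed.
Lemma smeet_r X Y : sle (smeet X Y) Y.
Proof. by rewrite /sle mksubE capmxSr. Qed.
Lemma smeet_glb X Y Z : sle Z X -> sle Z Y -> sle Z (smeet X Y).
Proof. by rewrite /sle mksubE sub_capmx => -> ->. Qed.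
Lemma sjoin_l X Y : sle X (sjoin X Y).
Proof. by rewrite /sle mksubE addsmxSl. Qed.
Lemma sjoin_r X Y : sle Y (sjoin X Y).
Proof. by rewrite /sle mksubE addsmxSr. Qed.
Lemma sjoin_lub X Y Z : sle X Z -> sle Y Z -> sle (sjoin X Y) Z.
Proof. by rewrite /sle mksubE addsmx_sub => -> ->. Qed.
Lemma sbot_le X : sle sbot X.
Proof. by rewrite /sle mksubE sub0mx. Qed.
Lemma sle_top X : sle X stop.
Proof. by rewrite /sle mksubE submx1. Qed.
Lemma scmpK X : scmp (scmp X) = X.
Proof.
apply: subsp_eq.
have e : (val (scmp (scmp X)) :=: ocm (ocm (val X)))%MS.
  exact: eqmx_trans (mksubE _) (ocm_eqmx (mksubE _)).
apply/eqmxP; exact: eqmx_trans e (eqmxP (ocmK _)).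
Qed.
Lemma scmp_anti X Y : sle X Y -> sle (scmp Y) (scmp X).
Proof. by rewrite /sle /scmp !mksubE; apply: ocmS. Qed.
Lemma smeet_cmp X : smeet X (scmp X) = sbot.
Proof.
apply: mksub_eq; apply/eqmxP.
apply: eqmx_trans (cap_eqmx (eqmx_refl _) (mksubE _)) _.
rewrite cap_ocm; exact: eqmx_refl.
Qed.
Lemma sjoin_cmp X : sjoin X (scmp X) = stop.
Proof.
apply: mksub_eq; apply/eqmxP.
apply: eqmx_trans (adds_eqmx (eqmx_refl _) (mksubE _)) _.
by apply/eqmxP; rewrite submx1 submx_full // full_ocm.
Qed.
Lemma sorthomod X Y : sle X Y -> Y = sjoin X (smeet Y (scmp X)).
Proof.
rewrite /sle => h; apply: subsp_eq; apply/eqmxP/eqmx_sym.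
apply: eqmx_trans (mksubE _) _.
apply: eqmx_trans (adds_eqmx (eqmx_refl _) (mksubE _)) _.
apply: eqmx_trans (adds_eqmx (eqmx_refl _) (cap_eqmx (eqmx_refl _) (mksubE _))) _.
rewrite capmxC; apply: eqmx_trans (matrix_modl _ h) _.
by apply/eqmxP; rewrite capmxSr sub_capmx submx_refl submx_full ?full_ocm.
Qed.
End ProjLattice.


Definition ProjOML (C : numClosedFieldType) (n : nat) : OML :=
  @Build_OML (subsp C n) (@sle C n) (@smeet C n) (@sjoin C n) (@sbot C n)
    (@stop C n) (@scmp C n)
    (@sle_refl C n) (@sle_trans C n) (@sle_anti C n)
    (@smeet_l C n) (@smeet_r C n) (@smeet_glb C n)
    (@sjoin_l C n) (@sjoin_r C n) (@sjoin_lub C n)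
    (@sbot_le C n) (@sle_top C n) (@scmpK C n) (@scmp_anti C n)
    (@smeet_cmp C n) (@sjoin_cmp C n) (@sorthomod C n).

(* Kochen-Specker obstructs every extension of the Stone spectrum to OML.

   Let F : OML^op -> Loc restrict on boolean algebras to the Stone spectrum
   B |-> Idl(B), and let P = Proj(M_n(C)) with n >= 3.  Every orthogonal
   decomposition q_1, ..., q_m of C^n is the image of an OML map
   2^m -> P out of a finite boolean algebra.  Transporting the principal
   ideal of an atom {i} of 2^m along this map gives an open u(q_i) of F(P);
   by naturality it depends only on the subspace q_i, and since the
   principal ideals form a lattice embedding 2^m -> Idl(2^m), the opens
   u(q_i) are pairwise disjoint and cover F(P).  Thus u is a frame-valued
   Kochen-Specker valuation.  The classical Kochen-Specker argument, run in
   the frame with distributivity in place of case analysis, shows that such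
   a valuation only exists on the trivial frame. *)

From HB Require Import structures.
From mathcomp Require Import all_boot all_order all_algebra.
From Stdlib Require Import ClassicalEpsilon FunctionalExtensionality.
From Stdlib Require Import ProofIrrelevance PropExtensionality.
Set Implicit Arguments. Unset Strict Implicit. Unset Printing Implicit Defensive.
Import GRing.Theory Num.Theory.
Local Open Scope ring_scope.

Section FrameFacts.
Variable L : Frame.
Implicit Types a x y z : L.

Definition fjoin x y : L := fsup (fun z => z = x \/ z = y).

Lemma fjoin_l x y : fle x (fjoin x y). Proof. by apply: fsup_ub; left. Qed.
Lemma fjoin_r x y : fle y (fjoin x y). Proof. by apply: fsup_ub; right. Qed.

Lemma fjoin_lub x y z : fle x z -> fle y z -> fle (fjoin x y) z.
Proof. by move=> hx hy; apply: fsup_least => w [->|->]. Qed.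

Lemma fle_joinl x y z : fle x y -> fle x (fjoin y z).
Proof. by move=> h; apply: fle_trans h (fjoin_l _ _). Qed.

Lemma fbot_le x : fle (fbot L) x. Proof. exact: fsup_least. Qed.

Lemma fmeet_fjoin_le a x y z :
  fle (fmeet a x) z -> fle (fmeet a y) z -> fle (fmeet a (fjoin x y)) z.
Proof.
move=> hx hy; rewrite /fjoin fmeet_sup.
by apply: fsup_least => _ [w [->|->] ->].
Qed.
End FrameFacts.

Lemma frame_hom_join (L M : Frame) (g : L -> M) : isFrameHom g ->
  forall x y, g (fjoin x y) = fjoin (g x) (g y).
Proof.
case=> hsup _ _ x y; rewrite /fjoin hsup; congr fsup.
apply: functional_extensionality => z; apply: propositional_extensionality.
split; first by case=> w [->|->] ->; [left|right].
by case=> ->; [exists x; [left|]|exists y; [right|]].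
Qed.

Lemma frame_hom_bot (L M : Frame) (g : L -> M) : isFrameHom g -> g (fbot L) = fbot M.
Proof.
case=> hsup _ _; rewrite /fbot hsup; congr fsup.
apply: functional_extensionality => z; apply: propositional_extensionality.
by split=> // -[].
Qed.

Lemma OMLHom_ext (A B : OML) (h1 h2 : OMLHom A B) :
  (forall x, h1 x = h2 x) -> h1 = h2.
Proof.
case: h1 h2 => f1 m1 j1 c1 b1 t1 [f2 m2 j2 c2 b2 t2] /= e.
have ef : f1 = f2 := functional_extensionality _ _ e.
by subst f2; f_equal; apply: proof_irrelevance.
Qed.

Lemma ohom_mono (A B : OML) (f : OMLHom A B) (x y : A) : ole x y -> ole (f x) (f y).
Proof.
move=> hxy; have <- : omeet x y = x.
  by apply: ole_anti; [apply: omeet_l|apply: omeet_glb => //; apply: ole_refl].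
by rewrite ohom_meet; apply: omeet_r.
Qed.

Lemma omeet_demorgan (A : OML) (x y : A) :
  ocmp (ojoin (ocmp x) (ocmp y)) = omeet x y.
Proof.
apply: ole_anti.
  apply: omeet_glb; rewrite -[X in ole _ X]ocmpK; apply: ocmp_anti;
    [exact: ojoin_l|exact: ojoin_r].
rewrite -[omeet x y]ocmpK; apply: ocmp_anti; apply: ojoin_lub; apply: ocmp_anti;
  [exact: omeet_l|exact: omeet_r].
Qed.

Lemma finset_ind (T : finType) (P : {set T} -> Prop) :
  P set0 -> (forall x S, P S -> P (x |: S)) -> forall S, P S.
Proof.
move=> P0 PU S; elim: {S}#|S| {-2}S (erefl #|S|) => [|k IH] S.
  by move/eqP; rewrite cards_eq0 => /eqP->.
move=> cardS.
have [x Sx] : exists x, x \in S by apply/set0Pn; rewrite -card_gt0 cardS.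
rewrite -(setD1K Sx); apply/PU/IH.
by move: cardS; rewrite (cardsD1 x) Sx => -[].
Qed.

Section PowerSet.
Variable T : finType.
Implicit Types A B D : {set T}.

Definition setOML : OML.
Proof.
refine (@Build_OML {set T} (fun A B => A \subset B) (@setI T) (@setU T)
  set0 setT (@setC T) _ _ _ _ _ _ _ _ _ _ _ _ _ _ _ _).
all: try by move=> *; rewrite ?subxx ?subsetIl ?subsetIr ?subsetUl ?subsetUr
  ?sub0set ?subsetT ?setCK ?setICr ?setUCr.
- exact: subset_trans.
- by move=> A B h1 h2; apply/eqP; rewrite eqEsubset h1 h2.
- by move=> A B D h1 h2; rewrite subsetI h1 h2.
- by move=> A B D h1 h2; rewrite subUset h1 h2.
- by move=> A B; rewrite setCS.
- by move=> A B /setUidPr AB; rewrite setUIr setUCr setIT AB.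
Defined.

Lemma setOML_bool : isBoolean setOML.
Proof. by move=> x y z; apply: setIUr. Qed.

Lemma setOML_hom_ext (P : OML) (g1 g2 : OMLHom setOML P) :
  (forall x, g1 [set x] = g2 [set x]) -> forall S, g1 S = g2 S.
Proof.
move=> e; apply: finset_ind => [|x S IH].
  exact: etrans (ohom_bot g1) (esym (ohom_bot g2)).
have hjoin (g : OMLHom setOML P) : g (x |: S) = ojoin (g [set x]) (g S).
  exact: ohom_join g [set x] S.
by rewrite !hjoin e IH.
Qed.
End PowerSet.

Section Orthogonality.
Variables (C : numClosedFieldType) (n : nat).
Implicit Types (X Y : 'M[C]_n) (p : subsp C n).

Lemma ocm_sym X Y : (X <= ocm Y)%MS = (Y <= ocm X)%MS.
Proof. by rewrite !sub_ocm; apply/eqP/eqP => /orth_sym. Qed.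

Lemma mksub_val p : mksub (val p) = p.
Proof. by apply: subsp_eq; apply/eqmxP; apply: mksubE. Qed.

Lemma rank_scmp p : \rank (val (scmp p)) = (n - \rank (val p))%N.
Proof. by rewrite mksubE rank_ocm. Qed.

Lemma sub_ocm_of_orth X (u v : 'rV[C]_n) :
  (X <= v)%MS -> u *m adjmx v = 0 -> (u <= ocm X)%MS.
Proof. by case/submxP => D ->; rewrite sub_ocm adjmxM mulmxA => ->; rewrite mul0mx. Qed.

Definition perp (p q : subsp C n) : bool := (val p <= ocm (val q))%MS.

Lemma perp_sym (p q : subsp C n) : perp p q = perp q p.
Proof. exact: ocm_sym. Qed.

Variables (m : nat) (q : 'I_m -> subsp C n).
Implicit Types S T : {set 'I_m}.

Definition span_of S : 'M[C]_n := (\sum_(i in S) val (q i))%MS.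
Definition orthogonal_family : Prop := forall i j, i != j -> perp (q i) (q j).
Definition complete_family : Prop := (1%:M <= span_of setT)%MS.

Lemma span_of_sub S X : (span_of S <= X)%MS = [forall i in S, val (q i) <= X]%MS.
Proof.
apply/sumsmx_subP/forall_inP => h i; first exact: h.
by move=> hi; apply: h.
Qed.

Lemma span_of_sup S i : i \in S -> (val (q i) <= span_of S)%MS.
Proof. by move=> hi; apply: (sumsmx_sup i). Qed.

Hypothesis horth : orthogonal_family.

Lemma span_of_perp S T : [disjoint S & T] -> (span_of S <= ocm (span_of T))%MS.
Proof.
move=> dST; rewrite span_of_sub; apply/forall_inP => i iS.
rewrite ocm_sym span_of_sub; apply/forall_inP => j jT.
by rewrite ocm_sym; apply: horth; apply: contraTneq jT => <-; rewrite (disjointFr dST).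
Qed.

Lemma rank_span_of S : \rank (span_of S) = (\sum_(i in S) \rank (val (q i)))%N.
Proof.
apply/eqP/mxdirect_sumsP => i _; apply/eqP; rewrite -submx0.
have sum_perp : ((\sum_(j | (j \in S) && (j != i)) val (q j)) <= ocm (val (q i)))%MS.
  by apply/sumsmx_subP => j /andP[_]; apply: horth.
by apply: submx_trans (capmxS (submx_refl _) sum_perp) _; rewrite cap_ocm.
Qed.

Lemma complete_of_rank : (\sum_i \rank (val (q i)))%N = n -> complete_family.
Proof.
move=> dim; rewrite /complete_family sub1mx /row_full rank_span_of.
by under eq_bigl do rewrite in_setT; rewrite dim.
Qed.

Hypothesis hfull : complete_family.

Lemma ocm_span_of S : (ocm (span_of S) == span_of (~: S))%MS.
Proof.
have le : (span_of (~: S) <= ocm (span_of S))%MS.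
  by apply: span_of_perp; rewrite disjoint_sym disjoints_subset setCK.
apply/andP; split=> //; have [_ <-] := mxrank_leqif_sup le.
have total : \rank (span_of setT) = n.
  by apply/eqP; move: hfull; rewrite /complete_family sub1mx.
rewrite rank_ocm -[X in (X - _)%N]total !rank_span_of (big_setID (A := [set: 'I_m]) S) /=.
rewrite setTI setTD.
by rewrite addKn.
Qed.

Definition decomp_fun (S : setOML 'I_m) : ProjOML C n := mksub (span_of S).

Lemma decomp_join S T : decomp_fun (S :|: T) = sjoin (decomp_fun S) (decomp_fun T).
Proof.
apply: mksub_eq; apply/andP; split; rewrite ?mksubE.
  rewrite span_of_sub; apply/forall_inP => i; rewrite inE => /orP[] hi.
    by apply: submx_trans (addsmxSl _ _); rewrite mksubE span_of_sup.
  by apply: submx_trans (addsmxSr _ _); rewrite mksubE span_of_sup.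
rewrite addsmx_sub !mksubE !span_of_sub.
by apply/andP; split; apply/forall_inP => i hi; apply: span_of_sup; rewrite inE hi ?orbT.
Qed.

Lemma decomp_cmp S : decomp_fun (~: S) = scmp (decomp_fun S).
Proof.
apply: mksub_eq; apply/eqmxP/eqmx_sym.
by apply: eqmx_trans (ocm_eqmx (mksubE _)) _; apply/eqmxP; apply: ocm_span_of.
Qed.

Lemma decomp_meet S T : decomp_fun (S :&: T) = smeet (decomp_fun S) (decomp_fun T).
Proof.
rewrite -[S :&: T]setCK setCI decomp_cmp decomp_join !decomp_cmp.
exact: (omeet_demorgan (A := ProjOML C n)).
Qed.

Lemma decomp_bot : decomp_fun set0 = sbot C n.
Proof. by apply: mksub_eq; rewrite /span_of big_set0; apply/eqmxP. Qed.

Lemma decomp_top : decomp_fun setT = stop C n.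
Proof. by apply: mksub_eq; rewrite submx1 hfull. Qed.

Definition decomp_hom : OMLHom (setOML 'I_m) (ProjOML C n) :=
  @Build_OMLHom (setOML _) (ProjOML C n) decomp_fun
    decomp_meet decomp_join decomp_cmp decomp_bot decomp_top.

Lemma decomp_fun_set1 i : decomp_fun [set i] = q i.
Proof. by rewrite /= /decomp_fun /span_of big_set1 mksub_val. Qed.
End Orthogonality.

Lemma I2_neq0 (i : 'I_2) : i != ord0 -> i = ord_max.
Proof. by case: i => [[|[|k]]] // hi _; apply: val_inj. Qed.

Section PairFamily.
Variables (C : numClosedFieldType) (n : nat) (p : subsp C n).

Definition pair_family (i : 'I_2) : subsp C n := if i == ord0 then p else scmp p.

Lemma pair_family_orth : orthogonal_family pair_family.
Proof.
have p_perp : perp p (scmp p) by rewrite /perp (ocm_eqmx (mksubE _)) sub_ocmK.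
move=> i j; rewrite /pair_family.
case: (i =P ord0) => [->|/eqP/I2_neq0->]; case: (j =P ord0) => [->|/eqP/I2_neq0->] //.
by rewrite perp_sym.
Qed.

Lemma pair_family_complete : complete_family pair_family.
Proof.
apply: complete_of_rank pair_family_orth _.
by rewrite big_ord_recr big_ord1 /= /pair_family /= rank_scmp subnKC ?rank_leq_col.
Qed.
End PairFamily.

Section SingleOut.
Variables (m : nat) (i : 'I_m).

Definition single_out_fun (S : setOML 'I_2) : setOML 'I_m :=
  [set j | if j == i then ord0 \in S else ord_max \in S].

Lemma single_out_meet S T :
  single_out_fun (S :&: T) = single_out_fun S :&: single_out_fun T.
Proof. by apply/setP => j; rewrite !inE; case: (j == i). Qed.

Lemma single_out_join S T :
  single_out_fun (S :|: T) = single_out_fun S :|: single_out_fun T.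
Proof. by apply/setP => j; rewrite !inE; case: (j == i). Qed.

Lemma single_out_cmp S : single_out_fun (~: S) = ~: single_out_fun S.
Proof. by apply/setP => j; rewrite !inE; case: (j == i). Qed.

Lemma single_out_bot : single_out_fun set0 = set0.
Proof. by apply/setP => j; rewrite !inE; case: (j == i). Qed.

Lemma single_out_top : single_out_fun setT = setT.
Proof. by apply/setP => j; rewrite !inE; case: (j == i). Qed.

Definition single_out : OMLHom (setOML 'I_2) (setOML 'I_m) :=
  @Build_OMLHom (setOML _) (setOML _) single_out_fun single_out_meet
    single_out_join single_out_cmp single_out_bot single_out_top.

Lemma single_out_set1 : single_out_fun [set ord0] = [set i].
Proof. by apply/setP => j; rewrite !inE; case: (j == i). Qed.
End SingleOut.

Lemma I2_hom_ext (P : OML) (g1 g2 : OMLHom (setOML 'I_2) P) :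
  g1 [set ord0] = g2 [set ord0] -> forall S, g1 S = g2 S.
Proof.
move=> e0; apply: setOML_hom_ext => i.
have [->|/I2_neq0->] := eqVneq i ord0; first exact: e0.
have compl : [set ord_max] = ~: [set ord0] :> setOML 'I_2.
  by apply/setP => j; rewrite !inE; have [->|/I2_neq0->] := eqVneq j ord0.
by rewrite compl -[~: _]/(@ocmp (setOML 'I_2) [set ord0]) !ohom_cmp e0.
Qed.

Definition KS_valuation (C : numClosedFieldType) (n : nat) (L : Frame)
    (v : subsp C n -> L) : Prop :=
  forall (m : nat) (q : 'I_m -> subsp C n), orthogonal_family q -> complete_family q ->
    (forall i j, i != j -> fmeet (v (q i)) (v (q j)) = fbot L) /\
    (forall z, (forall i, fle (v (q i)) z) -> fle (ftop L) z).

Definition stone_iso (F : OMLopLocFunctor)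
    (eta : forall B : OML, isBoolean B -> Fob F B -> (B -> Prop)) : Prop :=
  forall (B : OML) (hB : isBoolean B),
    [/\ forall x, isIdeal (eta B hB x),
        forall x y, @fle _ x y <-> (forall b, eta B hB x b -> eta B hB y b)
      & forall I, isIdeal I -> exists x, forall b, eta B hB x b <-> I b].

Definition stone_nat (F : OMLopLocFunctor)
    (eta : forall B : OML, isBoolean B -> Fob F B -> (B -> Prop)) : Prop :=
  forall (B B' : OML) (hB : isBoolean B) (hB' : isBoolean B')
         (f : OMLHom B B') (x : Fob F B) (b' : B'),
    eta B' hB' (Fmor F f x) b' <-> idl_map f (eta B hB x) b'.

Definition principal_ideal (B : OML) (b : B) : B -> Prop := fun c => ole c b.

Lemma principal_ideal_isIdeal (B : OML) (b : B) : isIdeal (principal_ideal b).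
Proof.
split; [exact: obot_le| |by move=> x y; apply: ojoin_lub].
by move=> x y h1 h2; apply: ole_trans h1 h2.
Qed.

Section StoneRestriction.
Variables (F : OMLopLocFunctor) (eta : forall B : OML, isBoolean B -> Fob F B -> (B -> Prop)).
Hypotheses (eta_iso : stone_iso eta) (eta_nat : stone_nat eta).

Section PrincipalOpens.
Variables (B : OML) (hB : isBoolean B).

Lemma eta_ideal (x : Fob F B) : isIdeal (eta hB x).
Proof. by case: (eta_iso hB). Qed.

Lemma eta_le (x y : Fob F B) : fle x y <-> (forall b, eta hB x b -> eta hB y b).
Proof. by case: (eta_iso hB). Qed.

Definition principal_open (b : B) : Fob F B :=
  proj1_sig (constructive_indefinite_description _
    (let: And3 _ _ surj := eta_iso hB in surj _ (principal_ideal_isIdeal b))).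

Lemma principal_openE b c : eta hB (principal_open b) c <-> ole c b.
Proof.
by rewrite /principal_open; case: constructive_indefinite_description.
Qed.

Lemma principal_open_mono b c : ole b c -> fle (principal_open b) (principal_open c).
Proof.
move=> bc; apply/eta_le => d /principal_openE db.
by apply/principal_openE; apply: ole_trans db bc.
Qed.

Lemma principal_open_join b c :
  principal_open (ojoin b c) = fjoin (principal_open b) (principal_open c).
Proof.
apply: fle_anti; last first.
  by apply: fjoin_lub; apply: principal_open_mono; [apply: ojoin_l|apply: ojoin_r].
have [_ down join] := eta_ideal (fjoin (principal_open b) (principal_open c)).
have self a : eta hB (principal_open a) a by apply/principal_openE; apply: ole_refl.
apply/eta_le => d /principal_openE /down; apply; apply: join.
  by move/eta_le: (fjoin_l (principal_open b) (principal_open c)); apply; apply: self.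
by move/eta_le: (fjoin_r (principal_open b) (principal_open c)); apply; apply: self.
Qed.

Lemma principal_open_meet b c :
  principal_open (omeet b c) = fmeet (principal_open b) (principal_open c).
Proof.
apply: fle_anti.
  by apply: fmeet_glb; apply: principal_open_mono; [apply: omeet_l|apply: omeet_r].
apply/eta_le => d hd; apply/principal_openE; apply: omeet_glb; apply/principal_openE.
  by move/eta_le: (fmeet_l (principal_open b) (principal_open c)); apply.
by move/eta_le: (fmeet_r (principal_open b) (principal_open c)); apply.
Qed.

Lemma principal_open_bot : principal_open (obot B) = fbot _.
Proof.
apply: fle_anti; last exact: fbot_le.
have [bot_in down _] := eta_ideal (fbot (Fob F B)).
by apply/eta_le => d /principal_openE /down; apply.
Qed.

Lemma principal_open_top : principal_open (otop B) = ftop _.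
Proof.
apply: fle_anti; first exact: fle_top.
by apply/eta_le => d _; apply/principal_openE; apply: ole_top.
Qed.
End PrincipalOpens.

Definition pull (B P : OML) (hB : isBoolean B) (h : OMLHom B P) (b : B) : Fob F P :=
  Fmor F h (principal_open hB b).

Section Pull.
Variables (B P : OML) (hB : isBoolean B) (h : OMLHom B P).
Let hom := lm_inv_hom (Fmor F h).

Lemma pull_join b c : pull hB h (ojoin b c) = fjoin (pull hB h b) (pull hB h c).
Proof. by rewrite /pull principal_open_join (frame_hom_join hom). Qed.

Lemma pull_meet b c : pull hB h (omeet b c) = fmeet (pull hB h b) (pull hB h c).
Proof. by rewrite /pull principal_open_meet; case: hom => _ -> _. Qed.

Lemma pull_bot : pull hB h (obot B) = fbot _.
Proof. by rewrite /pull principal_open_bot (frame_hom_bot hom). Qed.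

Lemma pull_top : pull hB h (otop B) = ftop _.
Proof. by rewrite /pull principal_open_top; case: hom => _ _ ->. Qed.
End Pull.

(* Naturality: pulling back along h' o f is pulling back along h' after f.
   This is where the naturality of eta enters. *)
Lemma pull_nat (B B' P : OML) (hB : isBoolean B) (hB' : isBoolean B')
    (f : OMLHom B B') (h' : OMLHom B' P) (h : OMLHom B P) :
  (forall x, h x = h' (f x)) -> forall b, pull hB h b = pull hB' h' (f b).
Proof.
move=> e b; have -> : h = compOMLHom h' f by apply: OMLHom_ext.
rewrite /pull Fmor_comp; congr (Fmor F h' _).
apply: fle_anti; apply/(eta_le hB') => d.
  case/eta_nat => c /principal_openE cb dc; apply/principal_openE.
  by apply: ole_trans dc _; apply: ohom_mono.
move/principal_openE=> db; apply/eta_nat; exists b => //.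
by apply/principal_openE; apply: ole_refl.
Qed.

Lemma pull_atoms_le (T : finType) (P : OML) (h : OMLHom (setOML T) P) z :
  (forall i, fle (pull (@setOML_bool T) h [set i]) z) ->
  forall S, fle (pull (@setOML_bool T) h S) z.
Proof.
move=> atoms; apply: finset_ind => [|x S IH].
  by rewrite -[set0]/(obot (setOML T)) pull_bot; apply: fbot_le.
rewrite -[x |: S]/(ojoin (_ : setOML T) _) pull_join.
exact: fjoin_lub.
Qed.

Definition atom_open (C : numClosedFieldType) (n : nat) (p : subsp C n) :
    Fob F (ProjOML C n) :=
  pull (@setOML_bool 'I_2) (decomp_hom (pair_family_orth p) (pair_family_complete p))
    [set ord0].

(* The atoms of every orthogonal decomposition are sent to the values of
   their subspaces: by naturality, the value does not depend on the
   decomposition in which a subspace occurs. *)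
Lemma pull_decomp_set1 (C : numClosedFieldType) (n m : nat) (q : 'I_m -> subsp C n)
    (horth : orthogonal_family q) (hfull : complete_family q) (i : 'I_m) :
  pull (@setOML_bool 'I_m) (decomp_hom horth hfull) [set i] = atom_open (q i).
Proof.
have ext S : decomp_hom (pair_family_orth (q i)) (pair_family_complete (q i)) S =
             decomp_hom horth hfull (single_out i S).
  apply: (I2_hom_ext (g2 := compOMLHom (decomp_hom horth hfull) (single_out i))).
  by rewrite /= single_out_set1 !decomp_fun_set1.
by rewrite /atom_open (pull_nat (@setOML_bool 'I_2) (@setOML_bool 'I_m) ext) /= single_out_set1.
Qed.

Theorem atom_open_KS (C : numClosedFieldType) (n : nat) :
  KS_valuation (@atom_open C n).
Proof.
move=> m q horth hfull; set h := decomp_hom horth hfull.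
have atom i : atom_open (q i) = pull (@setOML_bool 'I_m) h [set i].
  by rewrite pull_decomp_set1.
split=> [i j ij|z bound].
  have disj : omeet ([set i] : setOML 'I_m) [set j] = obot _.
    by apply/setP => k; rewrite !inE; apply: contraNF ij => /andP[/eqP<- /eqP<-].
  by rewrite !atom -pull_meet disj pull_bot.
rewrite -(pull_top (@setOML_bool 'I_m) h); apply: pull_atoms_le => i.
by rewrite -atom.
Qed.
End StoneRestriction.

(* Split i t1 t2 t3 splits
   on the three atoms a, b, c of the i-th triple: since the values of a, b, c
   and w cover the frame, it suffices to refute each of a, b, c in turn (the
   alternative w being the conclusion sought).  A Clash leaf closes a branch
   whose new atom is exclusive with an atom assumed further up. *)
Inductive ks_tree := Clash | Split of nat & ks_tree & ks_tree & ks_tree.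

Definition members (t : nat * nat * nat) : seq nat := let: (a, b, c) := t in [:: a; b; c].

Section Certificate.
Variable triples : seq (nat * nat * nat).

Definition exclusive (x y : nat) : bool :=
  has (fun t => [&& x \in members t, y \in members t & x != y]) triples.

Definition branch_ok (x : nat) (T : seq nat) (t : ks_tree) (rec : bool) : bool :=
  if t is Clash then has (exclusive x) T else rec.

(* refutes T t: the tree t shows that the atoms listed in T, assumed together,
   force the conclusion w. *)
Fixpoint refutes (T : seq nat) (t : ks_tree) : bool :=
  if t is Split i t1 t2 t3 then
    let: (a, b, c) := nth (0, 0, 0)%N triples i in
    [&& (i < size triples)%N, branch_ok a T t1 (refutes (a :: T) t1),
        branch_ok b T t2 (refutes (b :: T) t2) & branch_ok c T t3 (refutes (c :: T) t3)]
  else false.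

Variables (L : Frame) (x : nat -> L) (w : L).
Hypothesis cover : forall a b c, (a, b, c) \in triples ->
  fle (ftop L) (fjoin (fjoin (fjoin (x a) (x b)) (x c)) w).
Hypothesis excl : forall a b, exclusive a b -> fle (fmeet (x a) (x b)) w.

Definition meet_of (T : seq nat) : L := foldr (fun a acc => fmeet (x a) acc) (ftop L) T.

Lemma meet_of_le T y : y \in T -> fle (meet_of T) (x y).
Proof.
elim: T => //= a T IH; rewrite inE => /orP[/eqP->|yT]; first exact: fmeet_l.
exact: fle_trans (fmeet_r _ _) (IH yT).
Qed.

Lemma branch_ok_sound a T t (rec : bool) :
  branch_ok a T t rec -> (rec -> fle (meet_of (a :: T)) w) -> fle (fmeet (meet_of T) (x a)) w.
Proof.
case: t => [|i t1 t2 t3] /=.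
  case/hasP=> y yT ay _; apply: fle_trans (excl ay); apply: fmeet_glb; first exact: fmeet_r.
  exact: fle_trans (fmeet_l _ _) (meet_of_le yT).
move=> r /(_ r); apply: fle_trans.
by apply: fmeet_glb; [apply: fmeet_r|apply: fmeet_l].
Qed.

Lemma refutes_sound t T : refutes T t -> fle (meet_of T) w.
Proof.
elim: t T => [|i t1 IH1 t2 IH2 t3 IH3] T //=.
case ei: (nth _ triples i) => [[a b] c] /and4P[isize ok1 ok2 ok3].
have covered : fle (meet_of T) (fmeet (meet_of T) (fjoin (fjoin (fjoin (x a) (x b)) (x c)) w)).
  apply: fmeet_glb; first exact: fle_refl.
  by apply: fle_trans (fle_top _) (cover _); rewrite -ei mem_nth.
apply: fle_trans covered _; apply: fmeet_fjoin_le; last exact: fmeet_r.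
apply: fmeet_fjoin_le; last exact: branch_ok_sound ok3 (IH3 _).
apply: fmeet_fjoin_le; first exact: branch_ok_sound ok1 (IH1 _).
exact: branch_ok_sound ok2 (IH2 _).
Qed.
End Certificate.

Definition dot3 (a b : int * int * int) : int := a.1.1 * b.1.1 + a.1.2 * b.1.2 + a.2 * b.2.

Lemma dot3C a b : dot3 a b = dot3 b a.
Proof. by rewrite /dot3 mulrC [_ * b.1.2]mulrC [_ * b.2]mulrC. Qed.

(* A Kochen-Specker configuration in dimension 3: 109 integer rays, 86 triples
   of pairwise orthogonal rays among them, and a refutation tree for it. *)
Definition rays : seq (int * int * int) := [::
  (0, 0, 1); (0, 1, -2); (0, 1, -1); (0, 1, 0); (0, 1, 1); (0, 1, 2);
  (0, 2, -1); (0, 2, 1); (1, -5, -2); (1, -5, 2); (1, -4, -1); (1, -4, 1);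
  (1, -2, -5); (1, -2, -2); (1, -2, -1); (1, -2, 0); (1, -2, 1); (1, -2, 2);
  (1, -2, 5); (1, -1, -4); (1, -1, -2); (1, -1, -1); (1, -1, 0); (1, -1, 1);
  (1, -1, 2); (1, -1, 4); (1, 0, -2); (1, 0, -1); (1, 0, 0); (1, 0, 1);
  (1, 0, 2); (1, 1, -4); (1, 1, -2); (1, 1, -1); (1, 1, 0); (1, 1, 1);
  (1, 1, 2); (1, 1, 4); (1, 2, -5); (1, 2, -2); (1, 2, -1); (1, 2, 0);
  (1, 2, 1); (1, 2, 2); (1, 2, 5); (1, 4, -1); (1, 4, 1); (1, 5, -2);
  (1, 5, 2); (2, -5, -4); (2, -5, -1); (2, -5, 1); (2, -5, 4); (2, -4, -5);
  (2, -4, 5); (2, -2, -1); (2, -2, 1); (2, -1, -5); (2, -1, -2); (2, -1, -1);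
  (2, -1, 0); (2, -1, 1); (2, -1, 2); (2, -1, 5); (2, 0, -1); (2, 0, 1);
  (2, 1, -5); (2, 1, -2); (2, 1, -1); (2, 1, 0); (2, 1, 1); (2, 1, 2);
  (2, 1, 5); (2, 2, -1); (2, 2, 1); (2, 4, -5); (2, 4, 5); (2, 5, -4);
  (2, 5, -1); (2, 5, 1); (2, 5, 4); (4, -5, -2); (4, -5, 2); (4, -2, -5);
  (4, -2, 5); (4, -1, -1); (4, -1, 1); (4, 1, -1); (4, 1, 1); (4, 2, -5);
  (4, 2, 5); (4, 5, -2); (4, 5, 2); (5, -4, -2); (5, -4, 2); (5, -2, -4);
  (5, -2, -1); (5, -2, 1); (5, -2, 4); (5, -1, -2); (5, -1, 2); (5, 1, -2);
  (5, 1, 2); (5, 2, -4); (5, 2, -1); (5, 2, 1); (5, 2, 4); (5, 4, -2);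
  (5, 4, 2)]%Z.

Definition ray_vec (k : nat) : int * int * int := nth (0, 0, 0)%Z rays k.

Definition ks_triples : seq (nat * nat * nat) := [::
  (0, 3, 28); (0, 15, 69); (0, 22, 34); (0, 41, 60); (1, 7, 28); (1, 14, 105);
  (1, 42, 96); (1, 55, 108); (1, 74, 93); (2, 4, 28); (2, 13, 88); (2, 21, 70);
  (2, 35, 59); (2, 43, 85); (3, 26, 65); (3, 27, 29); (3, 30, 64); (4, 17, 87);
  (4, 23, 68); (4, 33, 61); (4, 39, 86); (5, 6, 28); (5, 16, 104); (5, 40, 97);
  (5, 56, 107); (5, 73, 94); (6, 20, 102); (6, 36, 99); (6, 58, 106); (6, 71, 95);
  (7, 24, 101); (7, 32, 100); (7, 62, 103); (7, 67, 98); (8, 32, 65); (9, 36, 64);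
  (10, 29, 67); (11, 27, 71); (12, 16, 69); (13, 54, 69); (13, 62, 73); (13, 65, 77);
  (14, 18, 69); (14, 29, 33); (15, 66, 70); (15, 67, 90); (15, 68, 72); (15, 71, 89);
  (16, 27, 35); (17, 53, 69); (17, 58, 74); (17, 64, 80); (19, 34, 56); (20, 23, 34);
  (20, 47, 65); (21, 24, 34); (21, 29, 40); (22, 31, 74); (22, 32, 35); (22, 33, 36);
  (22, 37, 73); (23, 27, 42); (24, 48, 64); (25, 34, 55); (26, 51, 70); (26, 56, 92);
  (26, 61, 79); (26, 74, 82); (27, 46, 62); (29, 45, 58); (30, 50, 68); (30, 55, 91);
  (30, 59, 78); (30, 73, 81); (38, 42, 60); (39, 49, 65); (39, 55, 71); (39, 60, 76);
  (40, 44, 60); (41, 57, 61); (41, 58, 84); (41, 59, 63); (41, 62, 83); (43, 52, 64);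
  (43, 56, 67); (43, 60, 75)]%N.

Definition ks_certificate : ks_tree :=
  (Split 0 (Split 4 (Split 42 Clash (Split 57 Clash (Split 63 (Split 74 (Split
  9 (Split 39 Clash (Split 44 Clash (Split 55 Clash (Split 16 Clash (Split 18
  Clash (Split 15 Clash Clash (Split 19 Clash Clash (Split 14 Clash Clash
  (Split 20 Clash Clash (Split 31 Clash Clash (Split 33 Clash Clash (Split 40
  Clash (Split 45 Clash Clash (Split 46 Clash Clash (Split 48 (Split 21 Clash
  (Split 23 Clash Clash (Split 25 Clash Clash (Split 35 (Split 37 (Split 47
  Clash Clash (Split 50 (Split 58 Clash Clash Clash) Clash Clash)) Clash
  Clash) Clash Clash))) Clash) Clash Clash))) Clash))))))) Clash) Clash)
  Clash) Clash) Clash) (Split 43 Clash (Split 11 Clash Clash (Split 14 Clash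
  Clash (Split 10 Clash Clash (Split 31 Clash Clash (Split 33 Clash Clash
  (Split 39 Clash (Split 45 Clash Clash (Split 46 Clash Clash (Split 49 Clash
  (Split 50 Clash Clash Clash) Clash))) Clash)))))) Clash) Clash) Clash Clash)
  Clash Clash) Clash) Clash) (Split 45 Clash Clash (Split 55 (Split 9 Clash
  (Split 15 Clash (Split 6 Clash Clash (Split 12 Clash Clash (Split 16 Clash
  Clash (Split 13 Clash Clash (Split 36 (Split 38 (Split 43 (Split 44 Clash
  (Split 46 Clash Clash (Split 47 Clash Clash (Split 49 Clash (Split 53 (Split
  14 Clash (Split 8 Clash Clash (Split 21 (Split 27 Clash Clash (Split 29
  Clash Clash (Split 34 (Split 40 (Split 50 Clash (Split 52 (Split 57 Clash
  (Split 58 Clash Clash Clash) Clash) Clash Clash) Clash) Clash Clash) Clash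
  Clash))) Clash Clash)) Clash) Clash Clash) Clash))) Clash) Clash Clash)
  Clash Clash) Clash Clash))))) Clash) Clash) Clash Clash)) Clash) (Split 1
  Clash (Split 36 (Split 37 (Split 64 Clash (Split 70 Clash (Split 2 Clash
  (Split 34 (Split 35 (Split 43 (Split 4 Clash (Split 8 Clash Clash (Split 40
  (Split 9 Clash (Split 11 Clash (Split 12 Clash Clash (Split 3 Clash Clash
  (Split 6 Clash Clash (Split 13 Clash Clash (Split 48 (Split 21 Clash (Split
  23 Clash Clash (Split 25 Clash Clash (Split 49 Clash (Split 50 Clash Clash
  Clash) Clash))) Clash) Clash Clash))))) Clash) Clash) Clash Clash)) Clash)
  Clash Clash) Clash Clash) Clash Clash) (Split 11 (Split 18 Clash Clash
  Clash) Clash Clash)) Clash) Clash) Clash Clash) Clash Clash) (Split 41 Clash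
  Clash (Split 43 Clash Clash (Split 2 Clash Clash (Split 9 (Split 17 Clash
  Clash (Split 18 Clash Clash (Split 35 (Split 44 Clash (Split 48 Clash Clash
  Clash) Clash) Clash Clash))) Clash Clash))))) (Split 1 Clash (Split 11 Clash
  (Split 2 Clash (Split 8 Clash Clash (Split 12 Clash Clash (Split 3 Clash
  Clash (Split 6 Clash Clash (Split 13 Clash Clash (Split 15 Clash (Split 16
  Clash Clash (Split 17 Clash Clash (Split 18 Clash Clash Clash))) Clash))))))
  Clash) Clash) (Split 5 Clash Clash (Split 10 Clash Clash (Split 17 Clash
  Clash (Split 22 Clash Clash (Split 2 Clash (Split 8 Clash Clash (Split 12
  Clash Clash (Split 3 Clash Clash (Split 6 Clash Clash (Split 13 Clash Clash
  (Split 16 Clash Clash (Split 19 Clash Clash (Split 14 Clash Clash (Split 20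
  Clash Clash (Split 23 Clash Clash (Split 25 Clash Clash (Split 26 Clash
  Clash (Split 27 Clash Clash (Split 30 Clash Clash (Split 31 Clash Clash
  (Split 40 Clash (Split 15 Clash Clash (Split 11 Clash Clash (Split 28 Clash
  Clash (Split 33 Clash Clash (Split 45 Clash Clash (Split 48 Clash Clash
  Clash)))))) Clash)))))))))))))))) (Split 7 Clash Clash (Split 11 Clash Clash
  (Split 14 Clash Clash (Split 18 Clash Clash (Split 16 Clash Clash (Split 13
  Clash Clash (Split 20 Clash Clash (Split 24 Clash Clash (Split 26 Clash
  Clash (Split 27 Clash Clash (Split 30 Clash Clash (Split 31 Clash Clash
  (Split 58 Clash Clash (Split 15 Clash Clash (Split 19 Clash Clash (Split 3
  Clash Clash (Split 6 Clash Clash (Split 23 Clash Clash (Split 28 Clash Clash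
  (Split 33 Clash Clash (Split 45 Clash Clash (Split 50 Clash Clash (Split 59
  Clash Clash Clash)))))))))))))))))))))))))))))).

Definition good_triple (t : nat * nat * nat) : bool :=
  pairwise (fun x y => dot3 (ray_vec x) (ray_vec y) == 0) (members t)
  && all (fun x => dot3 (ray_vec x) (ray_vec x) != 0) (members t).

Lemma ks_triples_good : all good_triple ks_triples.
Proof. by vm_compute. Qed.

Lemma ks_certificate_ok : refutes ks_triples [::] ks_certificate.
Proof. by vm_compute. Qed.

Lemma ray_vec28 : ray_vec 28 = (1, 0, 0)%Z.
Proof. by []. Qed.

Lemma triple28_mem : (0, 3, 28)%N \in ks_triples.
Proof. by []. Qed.

Section Embedding.
Variables (C : numClosedFieldType) (n : nat) (f : 'I_3 -> 'I_n).
Hypothesis finj : injective f.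

Definition vec3 (t : int * int * int) : 'rV[C]_3 :=
  \row_(k < 3) (nth 0 [:: t.1.1; t.1.2; t.2] k)%:~R.

Lemma vec3_dot a b : vec3 a *m adjmx (vec3 b) = (dot3 a b)%:~R%:M.
Proof.
apply/matrixP => i j; rewrite (ord1 i) (ord1 j) !mxE !big_ord_recr big_ord0 /= !mxE /=.
by rewrite !rmorph_int add0r /dot3 !intrD !intrM.
Qed.

Definition embed_mx : 'M[C]_(3, n) := \matrix_(k, l) (l == f k)%:R.

Lemma embed_mx_adj : embed_mx *m adjmx embed_mx = 1%:M.
Proof.
apply/matrixP => k k'; rewrite !mxE (bigD1 (f k)) //= big1 => [|l lk].
  rewrite !mxE eqxx (inj_eq finj) mul1r addr0.
  by case: (k == k'); rewrite ?rmorph1 ?rmorph0.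
by rewrite !mxE (negbTE lk) mul0r.
Qed.

Definition embed (t : int * int * int) : 'rV[C]_n := vec3 t *m embed_mx.

Lemma embed_dot a b : embed a *m adjmx (embed b) = (dot3 a b)%:~R%:M.
Proof.
by rewrite /embed adjmxM mulmxA -(mulmxA (vec3 a)) embed_mx_adj mulmx1 vec3_dot.
Qed.

Lemma embed_e1 : embed (1, 0, 0)%Z = delta_mx 0 (f 0).
Proof.
rewrite /embed; have -> : vec3 (1, 0, 0)%Z = delta_mx 0 0.
  apply/matrixP => i j; rewrite (ord1 i) !mxE /=.
  by case: j => [[|[|[|//]]]] jlt /=; rewrite ?mulr1z ?mulr0z.
rewrite -rowE; apply/matrixP => i j; rewrite (ord1 i) !mxE.
by rewrite eq_sym.
Qed.

Definition ray (v : 'rV[C]_n) : subsp C n := mksub <<v>>%MS.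
Definition image3 : subsp C n := mksub <<embed_mx>>%MS.

Lemma val_ray v : (val (ray v) :=: v)%MS.
Proof. exact: eqmx_trans (mksubE _) (genmxE v). Qed.

Lemma val_image3 : (val image3 :=: embed_mx)%MS.
Proof. exact: eqmx_trans (mksubE _) (genmxE _). Qed.

Lemma rank_image3 : \rank (val image3) = 3%N.
Proof.
rewrite val_image3; apply/eqP; rewrite eqn_leq rank_leq_row /=.
by have := mxrankM_maxl embed_mx (adjmx embed_mx); rewrite embed_mx_adj mxrank1.
Qed.

Lemma rank_ray a : dot3 a a != 0 -> \rank (val (ray (embed a))) = 1%N.
Proof.
move=> aa; rewrite val_ray rank_rV; suff -> : embed a != 0 by [].
apply/eqP => a0.
have := embed_dot a a; rewrite a0 mul0mx => /matrixP /(_ 0 0); rewrite !mxE eqxx /=.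
by move=> /esym/eqP; rewrite mulr1n intr_eq0 (negbTE aa).
Qed.

Lemma perp_ray a b : dot3 a b = 0 -> perp (ray (embed a)) (ray (embed b)).
Proof.
move=> ab; rewrite /perp val_ray; apply: (sub_ocm_of_orth (v := embed b)).
  by rewrite val_ray.
by rewrite embed_dot ab raddf0.
Qed.

Lemma perp_ray_image3c a : perp (ray (embed a)) (scmp image3).
Proof.
rewrite /perp val_ray (ocm_eqmx (mksubE _)).
by apply: submx_trans (sub_ocmK _); rewrite val_image3 submxMl.
Qed.

(* Each triple of the configuration, together with the orthocomplement of
   the image of C^3, is an orthogonal decomposition of C^n. *)
Definition ray_of (k : nat) : subsp C n := ray (embed (ray_vec k)).

Definition triple_family (t : nat * nat * nat) (k : 'I_4) : subsp C n :=
  if (k < 3)%N then ray_of (nth 0%N (members t) k) else scmp image3.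

Lemma triple_family_member t x :
  x \in members t -> triple_family t (inord (index x (members t))) = ray_of x.
Proof.
case: t => [[a b] c] xt.
have xlt : (index x [:: a; b; c] < 3)%N by rewrite -[3%N]/(size [:: a; b; c]) index_mem.
by rewrite /triple_family inordK ?xlt ?nth_index // ltnW.
Qed.

Lemma I4_ge3 (k : 'I_4) : (3 <= k)%N -> k = ord_max.
Proof. by case: k => [[|[|[|[|//]]]]] //= *; apply: val_inj. Qed.

Lemma triple_family_orth t : good_triple t -> orthogonal_family (triple_family t).
Proof.
case: t => [[a b] c] /andP[/(pairwiseP 0) tperp _] k l kl; rewrite /triple_family.
case: ltnP => k3; case: ltnP => l3; last 1 first.
- by move: kl; rewrite (I4_ge3 k3) (I4_ge3 l3) eqxx.
- apply: perp_ray; apply/eqP.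
  case: (ltngtP k l) => [|lk|/val_inj ekl]; first exact: tperp.
    by rewrite dot3C; apply: tperp.
  by move: kl; rewrite ekl eqxx.
- exact: perp_ray_image3c.
- by rewrite perp_sym; apply: perp_ray_image3c.
Qed.

Lemma triple_family_complete t : good_triple t -> complete_family (triple_family t).
Proof.
move=> tgood; apply: complete_of_rank (triple_family_orth tgood) _.
have /andP[_ /allP nonzero] := tgood.
have n3 : (3 <= n)%N by have := rank_leq_col (val image3); rewrite rank_image3.
rewrite big_ord_recr (_ : triple_family t ord_max = scmp image3) // rank_scmp rank_image3.
rewrite (eq_bigr (fun _ => 1%N)) => [|k _]; first by rewrite sum1_card card_ord [LHS]subnKC.
have k3 := ltn_ord k; rewrite /triple_family k3.
by apply/rank_ray/nonzero/mem_nth; case: (t) => [[]].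
Qed.
End Embedding.

Section Axes.
Variables (C : numClosedFieldType) (n : nat).

Definition axis (l : 'I_n) : subsp C n := ray (delta_mx 0 l).

Lemma axis_orth : orthogonal_family axis.
Proof.
move=> l l' ll'; rewrite /perp val_ray; apply: (sub_ocm_of_orth (v := delta_mx 0 l')).
  by rewrite val_ray.
have -> : adjmx (delta_mx 0 l' : 'rV[C]_n) = delta_mx l' 0.
  apply/matrixP => i j; rewrite !mxE andbC.
  by case: (_ && _); rewrite ?rmorph1 ?rmorph0.
by rewrite mul_delta_mx_cond (negbTE ll').
Qed.

Lemma axis_complete : complete_family axis.
Proof.
apply: complete_of_rank axis_orth _.
rewrite (eq_bigr (fun _ => 1%N)) ?sum1_card ?card_ord // => l _.
rewrite val_ray rank_rV; suff -> : delta_mx 0 l != 0 :> 'rV[C]_n by [].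
by apply/eqP => /matrixP /(_ 0 l); rewrite !mxE !eqxx; apply/eqP; rewrite oner_eq0.
Qed.
End Axes.

Lemma embedding_at (n : nat) (l : 'I_n) :
  (3 <= n)%N -> exists2 f : 'I_3 -> 'I_n, injective f & f 0 = l.
Proof.
move=> n3; have n0 : (0 < n)%N by apply: leq_trans n3.
exists (fun k => Ordinal (ltn_pmod (l + k) n0)); last first.
  by apply: val_inj; rewrite /= addn0 modn_small.
move=> k k' /(congr1 val) /= /eqP; rewrite eqn_modDl !modn_small => [/eqP e||].
- exact: val_inj.
- exact: leq_trans (ltn_ord k') n3.
- exact: leq_trans (ltn_ord k) n3.
Qed.

Section KochenSpecker.
Variables (C : numClosedFieldType) (n : nat) (L : Frame) (v : subsp C n -> L).
Hypothesis hv : KS_valuation v.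

Section FixedEmbedding.
Variables (f : 'I_3 -> 'I_n) (finj : injective f).

Let value (k : nat) : L := v (ray_of C f k).
Let outside : L := v (scmp (image3 C f)).

Lemma triple_facts a b c : (a, b, c) \in ks_triples ->
  [/\ fle (ftop L) (fjoin (fjoin (fjoin (value a) (value b)) (value c)) outside),
      forall x y, x \in members (a, b, c) -> y \in members (a, b, c) -> x != y ->
        fmeet (value x) (value y) = fbot L
    & forall x, x \in members (a, b, c) -> fmeet (value x) outside = fbot L].
Proof.
move=> /(allP ks_triples_good) tgood; set t := (a, b, c).
have [disj cover] := hv (triple_family_orth C finj tgood) (triple_family_complete C finj tgood).
have index3 x : x \in members t -> (index x (members t) < 3)%N.
  by rewrite -[3%N]/(size (members t)) index_mem.
have at_val x : x \in members t -> (inord (index x (members t)) : 'I_4) = index x (members t) :> nat.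
  by move=> xt; rewrite inordK //; apply/ltnW/index3.
split.
- apply: cover => k; rewrite /triple_family.
  case: k => [[|[|[|[|//]]]] klt] /=.
  + by apply/fle_joinl/fle_joinl/fjoin_l.
  + by apply/fle_joinl/fle_joinl/fjoin_r.
  + by apply/fle_joinl/fjoin_r.
  + exact: fjoin_r.
- move=> x y xt yt xy; rewrite /value -(triple_family_member C f xt) -(triple_family_member C f yt).
  apply: disj.
  apply: contra xy => /eqP/(congr1 (@nat_of_ord 4)); rewrite !at_val // => e.
  by rewrite (index_inj 0%N xt yt e).
- move=> x xt; rewrite /value /outside -(triple_family_member C f xt).
  have -> : scmp (image3 C f) = triple_family C f t ord_max by [].
  apply: disj; apply/eqP => /(congr1 (@nat_of_ord 4)); rewrite at_val // => e.
  by move: (index3 x xt); rewrite e.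
Qed.

Lemma outside_top : fle (ftop L) outside.
Proof.
apply: (refutes_sound (x := value) _ _ ks_certificate_ok).
  by move=> a b c /triple_facts[].
move=> x y /hasP[[[a b] c] tin /and3P[xt yt xy]].
have [_ ex _] := triple_facts tin.
by rewrite ex //; apply: fbot_le.
Qed.

Lemma embedded_axis_bot : v (axis C (f 0)) = fbot L.
Proof.
have [_ _ disj] := triple_facts triple28_mem.
have -> : axis C (f 0) = ray_of C f 28 by rewrite /ray_of ray_vec28 embed_e1.
apply: fle_anti; last exact: fbot_le.
rewrite -(disj 28) //; apply: fmeet_glb; first exact: fle_refl.
exact: fle_trans (fle_top _) outside_top.
Qed.
End FixedEmbedding.

Theorem KS_valuation_trivial : (3 <= n)%N -> fbot L = ftop L.
Proof.
move=> n3; have axis_bot (l : 'I_n) : v (axis C l) = fbot L.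
  by have [f finj <-] := embedding_at l n3; apply: embedded_axis_bot.
have [_ cover] := hv (@axis_orth C n) (@axis_complete C n).
apply: fle_anti; first exact: fbot_le.
by apply: cover => l; rewrite axis_bot; apply: fle_refl.
Qed.
End KochenSpecker.

Local Close Scope ring_scope.

Theorem mainTheorem10 (F : OMLopLocFunctor) (hF : StoneRestriction F)
  (C : numClosedFieldType) (n : nat) (hn : (3 <= n)%N) :
  trivial_locale (Fob F (ProjOML C n)).
Proof.
case: hF => eta [eta_iso eta_nat].
exact: KS_valuation_trivial (@atom_open_KS F eta eta_iso eta_nat C n) hn.
Qed.
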